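(* Let $\Bbbk$ be an algebraically closed field with $\mathrm{char}(\Bbbk)\neq 2$, let $n\ge 1$, and let $\mu=(\mu_{ij})$ with $\mu_{ij}\in\Bbbk^\times$, $\mu_{ij}\mu_{ji}=1$ for all $i,j$, and $\mu_{ii}=1$. Let $S$ be the $\Bbbk$-algebra on generators $z_1,\dots,z_n$ with defining relations $z_jz_i=\mu_{ij}z_iz_j$ for all $i,j$. Let $M_1,\dots,M_n$ be linearly independent $\mu$-symmetric $n\times n$ matrices, let $q_k=\sum_{i,j}(M_k)_{ij}z_iz_j\in S_2$, and assume the quadric system associated to $\{q_1,\dots,q_n\}$ is normalizing and base-point free. Let $A=T(V)/\langle W\rangle$ be the associated graded skew Clifford algebra written as a quadratic algebra, and let $\Gamma=\{(a,b)\in\mathbb P(S_1)\times\mathbb P(S_1): w(a\otimes b)=0\text{ for all }w\in W\}$. Then for $a,b\in S_1\setminus\{0\}$, the quadratic form $ab$ lies in $\mathbb P\big(\sum_{i=1}^n\Bbbk q_i\big)$ if and only if $(a,b)\in\Gamma$.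
   Context: A matrix $M\in M(n,\Bbbk)$ is $\mu$-symmetric if $M_{ij}=\mu_{ij}M_{ji}$ for all $i,j$. Let $U\subset T(S_1)_2=S_1\otimes S_1$ be the span of the defining relations $z_j\otimes z_i-\mu_{ij}z_i\otimes z_j$ of $S$, and let $\mathcal V(U)\subset\mathbb P(S_1^* )\times\mathbb P(S_1^* )$ be its zero locus. For $q\in S_2\setminus\{0\}$, $\mathcal V_U(q)=\mathcal V(\hat q)\cap\mathcal V(U)$ where $\hat q$ is any lift of $q$ to $S_1\otimes S_1$. The quadric system associated to $q_1,\dots,q_n$ is their span; it is normalizing if it is spanned by a normalizing sequence in $S$, and base-point free if $\bigcap_k\mathcal V_U(q_k)=\emptyset$. The graded skew Clifford algebra $A=A(\mu,M_1,\dots,M_n)$ is the graded $\Bbbk$-algebra with degree-one generators $x_1,\dots,x_n$ and degree-two generators $y_1,\dots,y_n$ with relations $x_ix_j+\mu_{ij}x_jx_i=\sum_{k}(M_k)_{ij}y_k$ for all $i,j$, together with the existence of a normalizing sequence $\{y_1',\dots,y_n'\}$ spanning $\sum_k\Bbbk y_k$. Under the stated hypotheses, $A$ is a quadratic algebra generated by $x_1,\dots,x_n$: $A=T(V)/\langle W\rangle$ where $V=S_1^*$, $\{x_i\}$ is the dual basis to $\{z_i\}$, and $W\subseteq V\otimes V$ is the space of quadratic relations, spanned by elements $\sum_{i,j}\alpha_{ijm}(x_ix_j+\mu_{ij}x_jx_i)$; its Koszul dual is $T(S_1)/\langle W^\perp\rangle=S/\langle q_1,\dots,q_n\rangle$,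 where $W^\perp\subseteq S_1\otimes S_1$ is the orthogonal complement of $W$. Here $w(a\otimes b)$ denotes the natural pairing of $w\in V\otimes V$ with $a\otimes b\in S_1\otimes S_1$. *)

From HB Require Import structures.
From mathcomp Require Import all_boot all_order all_algebra.
From mathcomp Require Import mpoly.

Set Implicit Arguments.
Unset Strict Implicit.
Unset Printing Implicit Defensive.

Import Order.TTheory GRing.Theory.
Local Open Scope ring_scope.

Section SkewClifford.
Variables (k : fieldType) (n : nat) (mu : 'M[k]_n).

(* The skew polynomial ring S = k<z_1..z_n>/(z_j z_i - mu_ij z_i z_j).     *)
(* Its underlying vector space is modelled by {mpoly k[n]}: the monomial   *)
(* 'X_[m] stands for the ordered monomial z_1^(m 1) ... z_n^(m n), which   *)
(* form a basis of S.  The product of S is the twisted product below:      *)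
(*   z^a z^b = (prod_(i > j) mu_ji ^ (a_i b_j)) z^(a+b),                    *)
(* obtained by moving each z_j (j < i) of z^b to the left past z_i of z^a  *)
(* using z_i z_j = mu_ji z_j z_i.                                          *)

Definition skew_twist (m1 m2 : 'X_{1..n}) : k :=
  \prod_(i < n) \prod_(j < n | (j < i)%N) (mu j i) ^+ (m1 i * m2 j).

Definition smul (p q : {mpoly k[n]}) : {mpoly k[n]} :=
  \sum_(m1 <- msupp p) \sum_(m2 <- msupp q)
     (p@_m1 * q@_m2 * skew_twist m1 m2) *: 'X_[(m1 + m2)%MM].

Definition zgen (i : 'I_n) : {mpoly k[n]} := 'X_i.

Definition lin1 (a : 'rV[k]_n) : {mpoly k[n]} := \sum_(i < n) a 0 i *: zgen i.

Definition quadric (M : 'M[k]_n) : {mpoly k[n]} :=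
  \sum_(i < n) \sum_(j < n) M i j *: smul (zgen i) (zgen j).

Definition in_span (g : 'I_n -> {mpoly k[n]}) (f : {mpoly k[n]}) : Prop :=
  exists c : 'I_n -> k, f = \sum_(l < n) c l *: g l.

Definition in_ideal_prefix (y : 'I_n -> {mpoly k[n]}) (m : nat)
    (f : {mpoly k[n]}) : Prop :=
  exists (r : nat) (a b : 'I_r -> {mpoly k[n]}) (idx : 'I_r -> 'I_n),
    (forall t, (idx t < m)%N) /\
    f = \sum_(t < r) smul (smul (a t) (y (idx t))) (b t).

Definition normal_mod (I : {mpoly k[n]} -> Prop) (x : {mpoly k[n]}) : Prop :=
  (forall s, exists t, I (smul x s - smul t x)) /\
  (forall s, exists t, I (smul s x - smul x t)).

Definition normalizing_seq (y : 'I_n -> {mpoly k[n]}) : Prop :=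
  forall m : 'I_n, normal_mod (in_ideal_prefix y m) (y m).

Definition normalizing_system (q : 'I_n -> {mpoly k[n]}) : Prop :=
  exists y : 'I_n -> {mpoly k[n]},
    normalizing_seq y /\
    (forall m, in_span q (y m)) /\ (forall l, in_span y (q l)).

(* Base-point freeness.  A point of P(S_1^* ) x P(S_1^* ) is a pair (p,r)  *)
(* of nonzero coordinate vectors (p_i = p(z_i)).  An element T of          *)
(* S_1 (x) S_1, T = sum T_ij z_i (x) z_j, vanishes at (p,r) iff            *)
(* sum T_ij p_i r_j = 0.                                                   *)

Definition tensor_eval (T : 'M[k]_n) (p r : 'rV[k]_n) : k :=
  \sum_(i < n) \sum_(j < n) T i j * p 0 i * r 0 j.

(* (p,r) lies in V(U), U spanned by z_j (x) z_i - mu_ij z_i (x) z_j *)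
Definition in_VU (p r : 'rV[k]_n) : Prop :=
  forall i j : 'I_n, p 0 j * r 0 i - mu i j * (p 0 i * r 0 j) = 0.

(* intersection of the V_U(q_l) is empty; M l is the lift of q_l *)
Definition base_point_free (M : 'I_n -> 'M[k]_n) : Prop :=
  ~ exists p r : 'rV[k]_n, [/\ p != 0, r != 0, in_VU p r &
        forall l, tensor_eval (M l) p r = 0].

Definition mu_symmetric (A : 'M[k]_n) : Prop :=
  forall i j, A i j = mu i j * A j i.

(* The quadratic relation space W of A in V (x) V (V = S_1^*, x_i dual to  *)
(* z_i; w = sum w_ij x_i (x) x_j).  It consists of the combinations        *)
(* sum alpha_ij (x_i x_j + mu_ij x_j x_i) whose right hand side            *)
(* sum_k (sum alpha_ij (M_k)_ij) y_k in the defining relations of A        *)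
(* vanishes, i.e. the relations of A involving only the x_i.               *)

Definition in_W (M : 'I_n -> 'M[k]_n) (w : 'M[k]_n) : Prop :=
  exists alpha : 'M[k]_n,
    (forall l, \sum_(i < n) \sum_(j < n) alpha i j * M l i j = 0) /\
    w = \matrix_(i, j) (alpha i j + mu j i * alpha j i).

Definition pairing (w : 'M[k]_n) (a b : 'rV[k]_n) : k :=
  \sum_(i < n) \sum_(j < n) w i j * a 0 i * b 0 j.

Definition in_Gamma (M : 'I_n -> 'M[k]_n) (a b : 'rV[k]_n) : Prop :=
  [/\ a != 0, b != 0 & forall w, in_W M w -> pairing w a b = 0].

Definition in_P_span (q : 'I_n -> {mpoly k[n]}) (f : {mpoly k[n]}) : Prop :=
  f != 0 /\ in_span q f.

End SkewClifford.

From HB Require Import structures.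
From mathcomp Require Import all_boot all_order all_algebra.
From mathcomp Require Import mpoly ring.
Import GRing.Theory.
Local Open Scope ring_scope.

(* The product of the linear forms [lin1 a] and [lin1 b] is the quadric of the
   rank-one matrix T = a^T b.  Over a field of characteristic other than 2 a
   quadric has exactly one mu-symmetric representing matrix, which for T is N/2
   with N = T + (mu_ij T_ji)_ij: the twisted transpose has the same quadric.
   Pairing the relation w of A built from alpha against a (x) b gives the
   trace pairing <alpha, N>, and these alpha are exactly the annihilator of
   span(M_l).  Hence (a, b) is in Gamma iff N lies in the double annihilator
   span(M_l), iff ab is a combination of the q_l; and ab <> 0 because N <> 0
   as soon as a, b <> 0. *)

Set Implicit Arguments.
Unset Strict Implicit.

Section Annihilator.
Variable k : fieldType.

Lemma submx_of_annihilated (m p : nat) (B : 'M[k]_(m, p)) (u : 'rV[k]_p) :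
  (forall v : 'cV_p, B *m v = 0 -> u *m v = 0) -> (u <= B)%MS.
Proof.
move=> annihilated; rewrite submxE; apply/eqP/matrixP => i j.
have := annihilated (cokermx B *m delta_mx j 0); rewrite mulmxA mulmx_coker mul0mx.
by move=> /(_ erefl); rewrite mulmxA -colE => /matrixP /(_ i 0); rewrite !mxE.
Qed.

Variable n : nat.

Definition mxdot (alpha X : 'M[k]_n) : k :=
  \sum_(i < n) \sum_(j < n) alpha i j * X i j.

Lemma mxdot_mxvec (alpha X : 'M[k]_n) :
  mxdot alpha X = (mxvec X *m (mxvec alpha)^T) 0 0.
Proof.
rewrite /mxdot pair_bigA mxE (reindex _ (curry_mxvec_bij _ _)) /=.
by apply: eq_bigr => -[i j] _; rewrite mxE !mxvecE mulrC.
Qed.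

Lemma mxdot_is_linear alpha : scalar (mxdot alpha).
Proof.
move=> c X Y; rewrite /mxdot mulr_sumr -big_split; apply: eq_bigr => i _.
rewrite mulr_sumr -big_split; apply: eq_bigr => j _.
by rewrite !mxE mulrDr mulrCA.
Qed.

HB.instance Definition _ alpha :=
  GRing.isLinear.Build k 'M[k]_n k *%R (mxdot alpha) (mxdot_is_linear alpha).

Lemma span_of_annihilated (m : nat) (M : 'I_m -> 'M[k]_n) (N : 'M[k]_n) :
  (forall alpha, (forall l, mxdot alpha (M l) = 0) -> mxdot alpha N = 0) ->
  exists c : 'I_m -> k, N = \sum_(l < m) c l *: M l.
Proof.
move=> annihilated; pose B := \matrix_(l < m) mxvec (M l).
have mxdot_vec (v : 'cV[k]_(n * n)) X : mxdot (vec_mx v^T) X = (mxvec X *m v) 0 0.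
  by rewrite mxdot_mxvec vec_mxK trmxK.
have /submxP[D ND] : (mxvec N <= B)%MS.
  apply: submx_of_annihilated => v Bv0; apply/rowP => i.
  rewrite ord1 -mxdot_vec [RHS]mxE.
  apply: annihilated => l; rewrite mxdot_vec -(rowK (fun l => mxvec (M l)) l) -/B.
  by rewrite -row_mul Bv0 row0 mxE.
exists (fun l => D 0 l); apply: (can_inj mxvecK).
rewrite ND mulmx_sum_row linear_sum; apply: eq_bigr => l _.
by rewrite linearZ rowK.
Qed.

End Annihilator.

Section Quadric.
Variables (k : fieldType) (n : nat) (mu : 'M[k]_n).

Lemma skew_twistU (i j : 'I_n) :
  skew_twist mu U_(i) U_(j) = if (j < i)%N then mu j i else 1.
Proof.
rewrite /skew_twist (bigD1 i) //= [X in _ * X]big1 ?mulr1; last first.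
  move=> i' /negbTE ne; apply: big1 => j' _.
  by rewrite mnm1E eq_sym ne mul0n.
case: ifP => [ji|/negbT nji].
  rewrite (bigD1 j) //= [X in _ * X]big1 ?mulr1; first by rewrite !mnm1E !eqxx.
  by move=> j' /andP[_ /negbTE ne]; rewrite !mnm1E [j == _]eq_sym ne muln0.
apply: big1 => j' lt_ji; rewrite !mnm1E.
have /negbTE -> : j != j' by apply: contraNneq nji => ->.
by rewrite muln0.
Qed.

Lemma smul_zgen (i j : 'I_n) :
  smul mu (zgen k i) (zgen k j) = skew_twist mu U_(i) U_(j) *: 'X_[U_(i) + U_(j)].
Proof. by rewrite /smul /zgen !msuppX !big_seq1 !mcoeffX !eqxx !mul1r. Qed.

Lemma mnm1_inj : injective (fun i : 'I_n => U_(i)%MM).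
Proof.
by move=> i j /(congr1 (fun m : 'X_{1..n} => m i)); rewrite !mnm1E eqxx; case: eqP.
Qed.

Lemma eq_mnm1D (i j i' j' : 'I_n) :
  (U_(i') + U_(j') == U_(i) + U_(j) :> 'X_{1..n})%MM =
  ((i' == i) && (j' == j)) || ((i' == j) && (j' == i)).
Proof.
apply/eqP/idP => [E|/orP[]/andP[/eqP-> /eqP->] //]; last exact: addmC.
have count_i' : ((i == i') + (j == i') = 1 + (j' == i'))%N.
  by have := congr1 (fun m : 'X_{1..n} => m i') E; rewrite !mnmDE !mnm1E eqxx.
have [ii'|ni] := eqVneq i i'.
  by move: E; rewrite -ii' => /addmI /mnm1_inj ->; rewrite !eqxx.
have [ji'|nj] := eqVneq j i'.
  by move: E; rewrite -ji' [RHS]addmC => /addmI /mnm1_inj ->; rewrite !eqxx orbT.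
by move: count_i'; rewrite (negbTE ni) (negbTE nj).
Qed.

Lemma mcoeff_quadric (P : 'M[k]_n) (i j : 'I_n) :
  (quadric mu P)@_(U_(i) + U_(j)) =
  \sum_(p in [set (i, j); (j, i)]) P p.1 p.2 * skew_twist mu U_(p.1) U_(p.2).
Proof.
rewrite /quadric pair_bigA raddf_sum [RHS]big_mkcond /=.
apply: eq_bigr => -[i' j'] _ /=; rewrite smul_zgen !mcoeffZ mcoeffX eq_mnm1D.
by rewrite !inE !xpair_eqE; case: ifP; rewrite ?mulr1 ?mulr0.
Qed.

Lemma mcoeff_quadric_diag (P : 'M[k]_n) (i : 'I_n) :
  (quadric mu P)@_(U_(i) + U_(i)) = P i i.
Proof. by rewrite mcoeff_quadric setUid big_set1 skew_twistU ltnn mulr1. Qed.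

Lemma mcoeff_quadric_lt (P : 'M[k]_n) (i j : 'I_n) : (i < j)%N ->
  (quadric mu P)@_(U_(i) + U_(j)) = P i j + mu i j * P j i.
Proof.
move=> lt_ij; rewrite mcoeff_quadric big_setU1 ?big_set1 /=; last first.
  by rewrite inE xpair_eqE; apply/nandP; left; rewrite neq_ltn lt_ij.
by rewrite !skew_twistU lt_ij ltnNge ltnW // mulr1 mulrC.
Qed.

Lemma quadric_is_linear : linear (quadric mu).
Proof.
move=> c P Q; rewrite /quadric scaler_sumr -big_split; apply: eq_bigr => i _.
rewrite scaler_sumr -big_split; apply: eq_bigr => j _.
by rewrite !mxE scalerDl scalerA.
Qed.

HB.instance Definition _ :=
  GRing.isLinear.Build k 'M[k]_n {mpoly k[n]} *:%R (quadric mu) quadric_is_linear.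

Lemma big_msupp_widen (V : zmodType) (p : {mpoly k[n]}) (s : seq 'X_{1..n})
    (F : 'X_{1..n} -> V) :
  uniq s -> {subset msupp p <= s} -> (forall m, p@_m = 0 -> F m = 0) ->
  \sum_(m <- msupp p) F m = \sum_(m <- s) F m.
Proof.
move=> uniq_s supp_s F0; rewrite [RHS](bigID (mem (msupp p))) /=.
rewrite [X in _ + X]big1 ?addr0 => [|m /memN_msupp_eq0 /F0 //].
rewrite -[RHS]big_filter; apply: perm_big.
apply: uniq_perm; rewrite ?msupp_uniq ?filter_uniq // => m.
by rewrite mem_filter andb_idr // => /supp_s.
Qed.

Definition mnm1_seq : seq 'X_{1..n} := [seq U_(i)%MM | i <- index_enum 'I_n].

Lemma mcoeff_lin1 (a : 'rV[k]_n) (i : 'I_n) : (lin1 a)@_U_(i) = a 0 i.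
Proof.
rewrite /lin1 raddf_sum (bigD1 i) //= big1 => [|j /negbTE ne_ji].
  by rewrite mcoeffZ mcoeffX eqxx mulr1 addr0.
by rewrite mcoeffZ mcoeffX (inj_eq mnm1_inj) ne_ji mulr0.
Qed.

Lemma msupp_lin1 (a : 'rV[k]_n) : {subset msupp (lin1 a) <= mnm1_seq}.
Proof.
move=> m; apply: contraLR => m_notU; rewrite mcoeff_msupp negbK /lin1 raddf_sum.
apply/eqP/big1 => i _ /=; rewrite mcoeffZ mcoeffX.
have [eq_m|] := eqVneq U_(i)%MM m; last by rewrite mulr0.
by rewrite -eq_m map_f ?mem_index_enum in m_notU.
Qed.

Lemma smul_lin1 (a b : 'rV[k]_n) :
  smul mu (lin1 a) (lin1 b) = quadric mu (a^T *m b).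
Proof.
have uniq_U : uniq mnm1_seq.
  by rewrite map_inj_uniq ?index_enum_uniq //; exact: mnm1_inj.
rewrite /smul (big_msupp_widen uniq_U (@msupp_lin1 a)) => [|m ->]; last first.
  by rewrite big1 // => m2 _; rewrite !mul0r scale0r.
rewrite big_map; apply: eq_bigr => i _.
rewrite (big_msupp_widen uniq_U (@msupp_lin1 b)) => [|m ->]; last first.
  by rewrite mulr0 mul0r scale0r.
rewrite big_map; apply: eq_bigr => j _.
by rewrite smul_zgen scalerA !mcoeff_lin1 !mxE big_ord1 !mxE.
Qed.

End Quadric.

Section MuSymmetric.
Variables (k : fieldType) (n : nat) (mu : 'M[k]_n).

Lemma mu_symmetricB (P Q : 'M[k]_n) :
  mu_symmetric mu P -> mu_symmetric mu Q -> mu_symmetric mu (P - Q).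
Proof. by move=> symP symQ i j; rewrite !mxE symP symQ mulrBr. Qed.

Lemma mu_symmetric_lincomb (m : nat) (M : 'I_m -> 'M[k]_n) (c : 'I_m -> k) :
  (forall l, mu_symmetric mu (M l)) -> mu_symmetric mu (\sum_(l < m) c l *: M l).
Proof.
move=> symM i j; rewrite !summxE mulr_sumr; apply: eq_bigr => l _.
by rewrite !mxE symM mulrCA.
Qed.

Definition mu_twist (P : 'M[k]_n) : 'M[k]_n := \matrix_(i, j) (mu i j * P j i).

Hypothesis mu_inv : forall i j, mu i j * mu j i = 1.

Lemma mu_symmetric_symmetrize (P : 'M[k]_n) : mu_symmetric mu (P + mu_twist P).
Proof. by move=> i j; rewrite !mxE mulrDr mulrA mu_inv mul1r addrC. Qed.

Hypothesis mu_diag : forall i, mu i i = 1.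

Lemma skew_twistU_swap (i j : 'I_n) :
  mu j i * skew_twist mu U_(j) U_(i) = skew_twist mu U_(i) U_(j).
Proof.
rewrite !skew_twistU; have [lt_ij|lt_ji|/val_inj ->] := ltngtP i j.
- by rewrite mu_inv.
- by rewrite mulr1.
- by rewrite mu_diag mulr1.
Qed.

Lemma quadric_mu_twist (P : 'M[k]_n) : quadric mu (mu_twist P) = quadric mu P.
Proof.
rewrite /quadric exchange_big; apply: eq_bigr => i _; apply: eq_bigr => j _.
rewrite !mxE !smul_zgen !scalerA addmC -skew_twistU_swap.
by rewrite mulrACA mu_inv mul1r.
Qed.

Lemma quadric_symmetrize (P : 'M[k]_n) :
  quadric mu (P + mu_twist P) = quadric mu P *+ 2.
Proof. by rewrite linearD /= quadric_mu_twist. Qed.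

Hypothesis char_k_neq2 : (2%:R : k) != 0.

Lemma quadric_mu_symmetric_eq0 (P : 'M[k]_n) :
  mu_symmetric mu P -> quadric mu P = 0 -> P = 0.
Proof.
move=> symP P0.
have upper (i j : 'I_n) : (i < j)%N -> P i j = 0.
  move=> lt_ij; have := mcoeff_quadric_lt mu P lt_ij.
  rewrite P0 mcoeff0 (symP j i) mulrA mu_inv mul1r -mulr2n -mulr_natr.
  by move/esym/eqP; rewrite mulf_eq0 (negbTE char_k_neq2) orbF => /eqP.
apply/matrixP => i j; rewrite mxE; have [lt_ij|lt_ji|/val_inj <-] := ltngtP i j.
- exact: upper.
- by rewrite symP upper ?mulr0.
- by rewrite -(mcoeff_quadric_diag mu) P0 mcoeff0.
Qed.

Lemma quadric_mu_symmetric_inj (P Q : 'M[k]_n) :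
  mu_symmetric mu P -> mu_symmetric mu Q -> quadric mu P = quadric mu Q -> P = Q.
Proof.
move=> symP symQ eqPQ; apply/eqP; rewrite -subr_eq0; apply/eqP.
apply: quadric_mu_symmetric_eq0; first exact: mu_symmetricB.
by rewrite raddfB /= eqPQ subrr.
Qed.

Lemma symmetrize_outer_neq0 (a b : 'rV[k]_n) :
  a != 0 -> b != 0 -> a^T *m b + mu_twist (a^T *m b) != 0.
Proof.
have outerE i j : (a^T *m b + mu_twist (a^T *m b)) i j =
    a 0 i * b 0 j + mu i j * (a 0 j * b 0 i).
  by rewrite !mxE !big_ord1 !mxE.
case/matrix0Pn=> _ [i] /[!ord1] a_i; case/matrix0Pn=> _ [j] /[!ord1] b_j.
apply/eqP => /matrixP N0.
have diag0 t : a 0 t * b 0 t = 0.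
  move: (N0 t t); rewrite outerE mu_diag mul1r mxE -mulr2n -mulr_natr.
  by move/eqP; rewrite mulf_eq0 (negbTE char_k_neq2) orbF => /eqP.
have b_i : b 0 i = 0.
  by move/eqP: (diag0 i); rewrite mulf_eq0 (negbTE a_i) => /eqP.
have a_j : a 0 j = 0.
  by move/eqP: (diag0 j); rewrite mulf_eq0 (negbTE b_j) orbF => /eqP.
move/eqP: (N0 i j); rewrite outerE a_j mul0r mulr0 addr0 mxE.
by rewrite mulf_eq0 (negbTE a_i) (negbTE b_j).
Qed.

End MuSymmetric.

Section Pairing.
Variables (k : fieldType) (n : nat) (mu : 'M[k]_n).

Lemma pairing_outer (w : 'M[k]_n) (a b : 'rV[k]_n) :
  pairing w a b = mxdot w (a^T *m b).
Proof.
by apply: eq_bigr => i _; apply: eq_bigr => j _; rewrite !mxE big_ord1 !mxE mulrA.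
Qed.

Lemma mxdot_mu_twist (alpha T : 'M[k]_n) :
  mxdot (\matrix_(i, j) (alpha i j + mu j i * alpha j i)) T =
  mxdot alpha (T + mu_twist mu T).
Proof.
have -> : mxdot (\matrix_(i, j) (alpha i j + mu j i * alpha j i)) T =
    mxdot alpha T + \sum_(i < n) \sum_(j < n) alpha j i * (mu j i * T i j).
  rewrite /mxdot -big_split; apply: eq_bigr => i _.
  by rewrite -big_split; apply: eq_bigr => j _; rewrite mxE /=; ring.
rewrite [X in _ + X]exchange_big /mxdot -big_split; apply: eq_bigr => i _.
by rewrite -big_split; apply: eq_bigr => j _; rewrite !mxE /=; ring.
Qed.

End Pairing.

Theorem lemma1p9 (k : closedFieldType) (n : nat) (mu : 'M[k]_n)
  (Hchar : (2%:R : k) != 0)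
  (Hn : (1 <= n)%N)
  (Hmu0 : forall i j, mu i j != 0)
  (Hmu1 : forall i j, mu i j * mu j i = 1)
  (Hmu2 : forall i, mu i i = 1)
  (M : 'I_n -> 'M[k]_n)
  (Hsym : forall l, mu_symmetric mu (M l))
  (Hind : forall c : 'I_n -> k, \sum_(l < n) c l *: M l = 0 -> forall l, c l = 0)
  (Hnormal : normalizing_system mu (fun l => quadric mu (M l)))
  (Hbpf : base_point_free mu M)
  (a b : 'rV[k]_n) (Ha : a != 0) (Hb : b != 0) :
  in_P_span (fun l => quadric mu (M l)) (smul mu (lin1 a) (lin1 b))
  <-> in_Gamma mu M a b.
Proof.
(* Independence, normality and base-point freeness make A a graded skew
   Clifford algebra; the equivalence itself does not depend on them. *)
rewrite /in_P_span /in_Gamma smul_lin1.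
set T := a^T *m b; set N := T + mu_twist mu T.
have symN : mu_symmetric mu N := mu_symmetric_symmetrize Hmu1 T.
have qN : quadric mu N = quadric mu T *+ 2 := quadric_symmetrize Hmu1 Hmu2 T.
have pairingN (alpha : 'M[k]_n) :
    pairing (\matrix_(i, j) (alpha i j + mu j i * alpha j i)) a b = mxdot alpha N.
  by rewrite pairing_outer mxdot_mu_twist.
split=> [[_ [c qT]]|[_ _ GammaW]].
- split=> // _ [alpha [Halpha ->]]; rewrite pairingN.
  have -> : N = \sum_(l < n) (c l *+ 2) *: M l.
    apply: (quadric_mu_symmetric_inj Hmu1 Hchar) => //.
      exact: mu_symmetric_lincomb.
    rewrite qN qT linear_sum -sumrMnl; apply: eq_bigr => l _.
    by rewrite linearZ scalerMnl.
  rewrite linear_sum big1 // => l _.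
  by rewrite linearZ /= [mxdot _ _](Halpha l) mulr0.
- have [d Nd] : exists d : 'I_n -> k, N = \sum_(l < n) d l *: M l.
    apply: span_of_annihilated => alpha Halpha; rewrite -pairingN.
    by apply: GammaW; exists alpha.
  have qT : quadric mu T = 2%:R^-1 *: quadric mu N.
    by rewrite qN -scaler_nat scalerA mulVf // scale1r.
  split.
  + apply: contra_neq (symmetrize_outer_neq0 Hmu2 Hchar Ha Hb) => qT0.
    by apply: (quadric_mu_symmetric_eq0 Hmu1 Hchar) => //; rewrite qN qT0 mul0rn.
  + exists (fun l => 2%:R^-1 * d l).
    rewrite qT Nd [quadric mu _]linear_sum scaler_sumr; apply: eq_bigr => l _.
    by rewrite linearZ scalerA.
Qed.
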